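(* Let $\mathfrak d$ be a delta operator on $\mathbb K[x]$ with basic sequence $(p_n(x))_{n\ge0}$. For each $i\in\mathbb N$ let $\Phi_i=\sum_{j\ge0}a^{(i)}_j\,\mathfrak d^{\,i+j}$, where $a^{(i)}_j\in\mathbb K$ and $a^{(i)}_0\neq0$ (the sum acts on each polynomial as a finite sum, since $\mathfrak d$ lowers degree by one). (1) There exists a unique sequence $(f_n(x))_{n\ge0}$ of polynomials with $\deg f_n=n$ such that $\varepsilon_0(\Phi_i(f_n))=n!\,\delta_{i,n}$ for all $i,n\in\mathbb N$. Moreover, for every $n$, $$f_n(x)=\frac{n!}{a^{(0)}_0a^{(1)}_0\cdots a^{(n)}_0}\det\Lambda^{(n)},$$ where $\Lambda^{(n)}$ is the $(n+1)\times(n+1)$ matrix (rows and columns indexed by $0,\dots,n$, entries in $\mathbb K[x]$) with $(i,j)$-entry equal to $a^{(i)}_{j-i}$ if $0\le i\le\min(j,n-1)$, equal to $p_j(x)/j!$ if $i=n$, and $0$ otherwise. (2) The sequence $(f_n(x))_{n\ge0}$ is a basis of $\mathbb K[x]$, and for every $f\in\mathbb K[x]$, $$f(x)=\sum_{n=0}^{\deg f}\frac{\varepsilon_0(\Phi_n(f))}{n!}\,f_n(x).$$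
   Context: $\mathbb K$ is a field of characteristic zero. For $a\in\mathbb K$, $E_a$ is the shift operator $f(x)\mapsto f(x+a)$ on $\mathbb K[x]$; a linear operator $S$ on $\mathbb K[x]$ is shift-invariant if $SE_a=E_aS$ for all $a\in\mathbb K$. A delta operator is a shift-invariant linear operator $\mathfrak d$ on $\mathbb K[x]$ such that $\mathfrak d(x)$ is a nonzero constant. The basic sequence of $\mathfrak d$ is the unique sequence of polynomials $(p_n(x))_{n\ge0}$ with $\deg p_n=n$, $p_0=1$, $p_n(0)=0$ for $n\ge1$, and $\mathfrak d(p_n)=np_{n-1}$ for $n\ge1$. For $z\in\mathbb K$, $\varepsilon_z$ denotes evaluation at $z$. $\delta_{i,n}$ is the Kronecker delta. *)

From HB Require Import structures.
From mathcomp Require Import all_boot all_order all_algebra.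
Set Implicit Arguments. Unset Strict Implicit. Unset Printing Implicit Defensive.
Import Order.TTheory GRing.Theory Num.Theory.
Local Open Scope ring_scope.

Definition shift (K : fieldType) (a : K) (p : {poly K}) : {poly K} :=
  p \Po ('X + a%:P).

Definition shift_invariant (K : fieldType) (S : {poly K} -> {poly K}) : Prop :=
  forall (a : K) (p : {poly K}), S (shift a p) = shift a (S p).

Definition delta_op (K : fieldType) (d : {linear {poly K} -> {poly K}}) : Prop :=
  shift_invariant d /\ exists c : K, c != 0 /\ d 'X = c%:P.

Definition basic_seq (K : fieldType) (d : {poly K} -> {poly K})
    (p : nat -> {poly K}) : Prop :=
  [/\ forall n, size (p n) = n.+1,
      p 0%N = 1,
      forall n, (0 < n)%N -> (p n).[0] = 0 &
      forall n, (0 < n)%N -> d (p n) = n%:R *: p n.-1].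

(* The sum is truncated at
   j < size f: for j >= size f we have i + j > deg f, so d^(i+j) f = 0
   (a delta operator lowers degrees by one), i.e. the truncation is just
   the finite form of the formal sum. *)
Definition Phi (K : fieldType) (d : {poly K} -> {poly K})
    (a : nat -> nat -> K) (i : nat) (f : {poly K}) : {poly K} :=
  \sum_(j < size f) a i j *: iter (i + j) d f.

Definition Lambda (K : fieldType) (a : nat -> nat -> K)
    (p : nat -> {poly K}) (n : nat) : 'M[{poly K}]_(n.+1) :=
  \matrix_(i < n.+1, j < n.+1)
    if (i == n :> nat) then ((j`!)%:R)^-1 *: p j
    else if (i <= j)%N then (a i (j - i)%N)%:P else 0.

Definition biorth (K : fieldType) (d : {poly K} -> {poly K})
    (a : nat -> nat -> K) (f : nat -> {poly K}) : Prop :=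
  (forall n, size (f n) = n.+1) /\
  (forall i n, (Phi d a i (f n)).[0] = (n`!)%:R * (i == n)%:R).

From HB Require Import structures.
From mathcomp Require Import all_boot all_order all_algebra.
From Stdlib Require Import FunctionalExtensionality.
Set Implicit Arguments. Unset Strict Implicit. Unset Printing Implicit Defensive.
Import Order.TTheory GRing.Theory Num.Theory.
Local Open Scope ring_scope.

(* Write q_j := p_j / j!, so that d q_(j+1) = q_j and q_j(0) = [j = 0]; hence
   (Phi_i q_j)(0) = A_ij with A_ij := a^(i)_(j-i) for i <= j and 0 otherwise,
   an upper triangular matrix with nonzero diagonal.  Expanding det Lambda^(n)
   along its last row gives sum_j C_j q_j with C_j the cofactors of A, so
   (Phi_i det Lambda^(n))(0) = sum_j A_ij C_j is the determinant of A with its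
   last row replaced by row i: zero unless i = n, and prod_k a^(k)_0 when i = n.
   Uniqueness, freeness and the expansion formula all follow from the fact that
   a polynomial of degree < m killed by (Phi_i .)(0) for every i < m is zero,
   proved by peeling off top coefficients against q_(m-1). *)

Lemma iter_linearD (R : pzRingType) (V : lmodType R) (f : {linear V -> V}) m :
  {morph iter m f : u v / u + v}.
Proof. by elim: m => [|m IHm] u v //=; rewrite IHm linearD. Qed.

Lemma iter_linearZ (R : pzRingType) (V : lmodType R) (f : {linear V -> V}) m k u :
  iter m f (k *: u) = k *: iter m f u.
Proof. by elim: m => [|m IHm] //=; rewrite IHm linearZ. Qed.

Lemma size_cancel_lead (K : fieldType) (g h : {poly K}) n :
  (size g <= n.+1)%N -> size h = n.+1 -> (size (g - (g`_n / h`_n) *: h)%R <= n)%N.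
Proof.
move=> szg szh; have hn0 : h`_n != 0.
  by rewrite -[n]/(n.+1.-1) -szh -lead_coefE lead_coef_eq0 -size_poly_eq0 szh.
apply/leq_sizeP => j; rewrite leq_eqVlt => /orP[/eqP <-|ltnj].
  by rewrite coefB coefZ divfK // subrr.
have szh' : (size h <= n.+1)%N by rewrite szh.
by rewrite coefB coefZ (leq_sizeP _ _ szg j) ?(leq_sizeP _ _ szh' j) ?mulr0 ?subrr.
Qed.

Lemma cofactor_last_row_eq (R : comPzRingType) n (M N : 'M[R]_n.+1) j :
  (forall k l, k != ord_max -> M k l = N k l) ->
  cofactor M ord_max j = cofactor N ord_max j.
Proof.
move=> eqMN; rewrite /cofactor; congr (_ * \det _).
by apply/matrixP => k l; rewrite !mxE eqMN // eq_sym neq_lift.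
Qed.

Lemma expand_det_last_row (R : comPzRingType) n (M N : 'M[R]_n.+1) :
  (forall k l, k != ord_max -> M k l = N k l) ->
  \det M = \sum_j M ord_max j * cofactor N ord_max j.
Proof.
move=> eqMN; rewrite (expand_det_row _ ord_max).
by apply: eq_bigr => j _; rewrite (cofactor_last_row_eq _ eqMN).
Qed.

Section DeltaOperator.

Variables (K : fieldType) (d : {linear {poly K} -> {poly K}}).
Hypothesis hd : delta_op d.

Lemma delta_op1 : d 1 = 0.
Proof.
case: hd => dE [c [_ dX]]; have := dE 1 'X.
rewrite /shift comp_polyX dX comp_polyC linearD dX polyC1 -[RHS]addr0.
exact: addrI.
Qed.

Variable p : nat -> {poly K}.
Hypothesis hp : basic_seq d p.

Lemma size_delta_op_leq n (g : {poly K}) :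
  (size g <= n.+1)%N -> (size (d g) <= n)%N.
Proof.
case: hp => szp _ _ dp; elim: n g => [|n IHn] g szg.
  by rewrite (size1_polyC szg) -alg_polyC linearZ /= delta_op1 scaler0 size_poly0.
set c := g`_n.+1 / (p n.+1)`_n.+1.
have szr : (size (g - c *: p n.+1)%R <= n.+1)%N by apply: size_cancel_lead.
rewrite -(subrK (c *: p n.+1) g) linearD [d (c *: _)]linearZ /= dp //.
rewrite (leq_trans (size_polyD _ _)) // geq_max (leqW (IHn _ szr)) /=.
by rewrite !(leq_trans (size_scale_leq _ _)) ?szp.
Qed.

Lemma iter_delta_op_eq0 m (g : {poly K}) : (size g <= m)%N -> iter m d g = 0.
Proof.
elim: m g => [|m IHm] g szg; first by apply/eqP; rewrite -size_poly_eq0 -leqn0.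
by rewrite iterSr IHm // size_delta_op_leq.
Qed.

Variable a : nat -> nat -> K.

Lemma Phi_widen i N (g : {poly K}) : (size g <= N)%N ->
  Phi d a i g = \sum_(j < N) a i j *: iter (i + j) d g.
Proof.
move=> szg; rewrite /Phi (big_ord_widen N (fun j => a i j *: iter (i + j) d g) szg).
rewrite big_mkcond /=; apply: eq_bigr => j _; case: ltnP => // szgj.
by rewrite iter_delta_op_eq0 ?scaler0 // (leq_trans szgj) ?leq_addl.
Qed.

Lemma Phi_is_linear i : linear (Phi d a i).
Proof.
move=> k g h; pose N := (size g + size h)%N.
have szkgh : (size (k *: g + h)%R <= N)%N.
  rewrite (leq_trans (size_polyD _ _)) // geq_max leq_addl andbT.
  exact: leq_trans (size_scale_leq _ _) (leq_addr _ _).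
rewrite (Phi_widen _ szkgh) (Phi_widen _ (leq_addr (size h) (size g))).
rewrite (Phi_widen _ (leq_addl (size g) (size h))).
rewrite scaler_sumr -big_split; apply: eq_bigr => j _.
by rewrite iter_linearD iter_linearZ scalerDr !scalerA mulrC.
Qed.

HB.instance Definition _ i :=
  GRing.isLinear.Build K {poly K} {poly K} *:%R (Phi d a i) (Phi_is_linear i).

Lemma Phi_small i (g : {poly K}) : (size g <= i)%N -> Phi d a i g = 0.
Proof.
move=> szg; rewrite /Phi big1 // => j _.
by rewrite iter_delta_op_eq0 ?scaler0 // (leq_trans szg) ?leq_addr.
Qed.

Hypothesis charK : [pchar K] =i pred0.

Lemma natf_fact_neq0 n : (n`!)%:R != 0 :> K.
Proof. by rewrite ((pcharf0P K).1 charK) -lt0n fact_gt0. Qed.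

Definition basic_div_fact j := ((j`!)%:R)^-1 *: p j.

Lemma size_basic_div_fact j : size (basic_div_fact j) = j.+1.
Proof. by case: hp => szp _ _ _; rewrite size_scale ?invr_neq0 ?natf_fact_neq0. Qed.

Lemma delta_basic_div_fact j :
  d (basic_div_fact j) = if j is j'.+1 then basic_div_fact j' else 0.
Proof.
case: hp => _ p0 _ dp; rewrite linearZ /=; case: j => [|j].
  by rewrite p0 delta_op1 scaler0.
rewrite dp //= scalerA /basic_div_fact factS natrM invfM mulrAC mulVf ?mul1r //.
by rewrite ((pcharf0P K).1 charK).
Qed.

Lemma horner_iter_basic_div_fact m j :
  (iter m d (basic_div_fact j)).[0] = (m == j)%:R.
Proof.
case: hp => _ p0 p_0 _.
have -> : iter m d (basic_div_fact j) =
    if (m <= j)%N then basic_div_fact (j - m) else 0.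
  elim: m => [|m IHm]; first by rewrite subn0.
  rewrite iterS IHm; case: ltngtP => [ltmj|ltjm|->].
  - by rewrite -subnSK // delta_basic_div_fact.
  - by rewrite linear0.
  - by rewrite subnn delta_basic_div_fact.
rewrite eqn_leq; case: leqP => [lemj|_]; last by rewrite horner0.
rewrite hornerZ -subn_eq0; case: (j - m)%N => [|k]; last by rewrite p_0 // mulr0.
by rewrite p0 hornerC invr1 mulr1.
Qed.

Definition Phi_coef i j := if (i <= j)%N then a i (j - i) else 0.

Lemma horner_Phi_basic_div_fact i j :
  (Phi d a i (basic_div_fact j)).[0] = Phi_coef i j.
Proof.
rewrite /Phi size_basic_div_fact horner_sum.
under eq_bigr do rewrite hornerZ horner_iter_basic_div_fact.
rewrite /Phi_coef; case: leqP => [leij|ltji]; last first.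
  by rewrite big1 // => k _; rewrite gtn_eqF ?mulr0 // (leq_trans ltji) ?leq_addr.
rewrite (bigD1 (Ordinal (leq_ltn_trans (leq_subr i j) (ltnSn j)))) //=.
rewrite subnKC // eqxx mulr1 big1 ?addr0 // => k neqk.
case: eqP => [eqj|_]; last by rewrite mulr0.
case/eqP: neqk; apply/val_inj/eqP => /=.
by rewrite -(eqn_add2l i) subnKC // eqj.
Qed.

Hypothesis ha : forall i, a i 0 != 0.

Lemma poly_eq0_Phi m (g : {poly K}) : (size g <= m)%N ->
  (forall i, (i < m)%N -> (Phi d a i g).[0] = 0) -> g = 0.
Proof.
elim: m g => [|m IHm] g szg Phig0; first by apply/eqP; rewrite -size_poly_eq0 -leqn0.
set c := g`_m / (basic_div_fact m)`_m.
have szr := size_cancel_lead szg (size_basic_div_fact m).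
have c0 : c = 0.
  have := Phig0 m (ltnSn m); rewrite -(subrK (c *: basic_div_fact m) g).
  rewrite linearD /= hornerD Phi_small // horner0 add0r linearZ /= hornerZ.
  rewrite horner_Phi_basic_div_fact /Phi_coef leqnn subnn.
  by move/eqP; rewrite mulf_eq0 (negbTE (ha m)) orbF => /eqP.
rewrite -/c c0 scale0r subr0 in szr.
by apply: IHm => // i ltim; apply: Phig0; rewrite ltnW.
Qed.

Definition Phi_mx n : 'M[K]_n.+1 := \matrix_(k, l) Phi_coef k l.

Definition Phi_mx_last_row n (i : nat) : 'M[K]_n.+1 :=
  \matrix_(k, l) Phi_coef (if k == ord_max then i else k) l.

Lemma det_Lambda n : \det (Lambda a p n) =
  \sum_(j < n.+1) cofactor (Phi_mx n) ord_max j *: basic_div_fact j.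
Proof.
rewrite (expand_det_last_row (N := map_mx polyC (Phi_mx n))); last first.
  move=> k l; rewrite -val_eqE !mxE /= => /negbTE ->.
  by rewrite /Phi_coef; case: leqP.
by apply: eq_bigr => j _; rewrite cofactor_map_mx mxE eqxx mulrC mul_polyC.
Qed.

Lemma horner_Phi_det_Lambda n i :
  (Phi d a i (\det (Lambda a p n))).[0] = \det (Phi_mx_last_row n i).
Proof.
rewrite det_Lambda linear_sum horner_sum.
rewrite (expand_det_last_row (N := Phi_mx n)); last first.
  by move=> k l /negbTE neqk; rewrite !mxE neqk.
apply: eq_bigr => j _; rewrite linearZ hornerZ horner_Phi_basic_div_fact.
by rewrite mxE eqxx mulrC.
Qed.

Lemma det_Phi_mx_last_row n i :
  \det (Phi_mx_last_row n i) = (i == n)%:R * \prod_(k < n.+1) a k 0.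
Proof.
case: (ltngtP i n) => [ltin|ltni|->]; rewrite ?mul0r ?mul1r.
- have neqi : Ordinal (ltnW ltin : i < n.+1)%N != ord_max.
    by rewrite -val_eqE /= ltn_eqF.
  apply: (determinant_alternate neqi) => l.
  by rewrite !mxE -val_eqE /= ltn_eqF // eqxx.
- rewrite (expand_det_row _ ord_max) big1 // => j _.
  by rewrite mxE eqxx /Phi_coef leqNgt (leq_trans (ltn_ord j)) ?mul0r.
- rewrite -det_tr det_trig; last first.
    apply/is_trig_mxP => k l ltkl; rewrite !mxE /Phi_coef leqNgt.
    by case: eqP ltkl => [->|_] ->.
  apply: eq_bigr => k _; rewrite !mxE /Phi_coef.
  by case: eqP => [->|_]; rewrite leqnn subnn.
Qed.

Definition Lambda_seq n : {poly K} :=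
  ((n`!)%:R / \prod_(i < n.+1) a i 0) *: \det (Lambda a p n).

Lemma horner_Phi_Lambda_seq i n :
  (Phi d a i (Lambda_seq n)).[0] = (n`!)%:R * (i == n)%:R.
Proof.
rewrite linearZ hornerZ horner_Phi_det_Lambda det_Phi_mx_last_row.
rewrite mulrCA -mulrA mulVf ?mulr1 1?mulrC //.
by rewrite prodf_seq_neq0; apply/allP => k _; apply: ha.
Qed.

Lemma size_Lambda_seq n : size (Lambda_seq n) = n.+1.
Proof.
apply/eqP; rewrite eqn_leq ltnNge; apply/andP; split.
  rewrite (leq_trans (size_scale_leq _ _)) // det_Lambda (leq_trans (size_sum _ _ _)) //.
  apply/bigmax_leqP => j _.
  by rewrite (leq_trans (size_scale_leq _ _)) // size_basic_div_fact.
apply/negP => szf; have := horner_Phi_Lambda_seq n n.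
by rewrite Phi_small // horner0 eqxx mulr1 => /esym/eqP; rewrite (negbTE (natf_fact_neq0 n)).
Qed.

Lemma biorth_Lambda_seq : biorth d a Lambda_seq.
Proof. by split; [apply: size_Lambda_seq | apply: horner_Phi_Lambda_seq]. Qed.

Section Biorthogonal.

Variable f : nat -> {poly K}.
Hypothesis hf : biorth d a f.

Lemma horner_Phi_biorth_sum m (c : 'I_m -> K) (i : 'I_m) :
  (Phi d a i (\sum_(k < m) c k *: f k)).[0] = c i * (i`!)%:R.
Proof.
case: hf => _ Phif; rewrite linear_sum horner_sum (bigD1 i) //= big1 => [|k neqk].
  by rewrite linearZ hornerZ Phif eqxx mulr1 addr0.
by rewrite linearZ hornerZ Phif eq_sym (negbTE (neqk : k != i :> nat)) !mulr0.
Qed.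

Lemma biorth_free m (c : 'I_m -> K) :
  \sum_(k < m) c k *: f k = 0 -> forall k, c k = 0.
Proof.
move=> sum0 k; have := horner_Phi_biorth_sum c k.
rewrite sum0 linear0 horner0 => /esym/eqP.
by rewrite mulf_eq0 (negbTE (natf_fact_neq0 k)) orbF => /eqP.
Qed.

Lemma biorth_expansion (g : {poly K}) :
  g = \sum_(n < size g) ((Phi d a n g).[0] / (n`!)%:R) *: f n.
Proof.
case: hf => szf _; apply/eqP; rewrite -subr_eq0; apply/eqP.
apply: (poly_eq0_Phi (m := size g)) => [|i ltig].
  rewrite (leq_trans (size_polyD _ _)) // size_polyN geq_max leqnn.
  rewrite (leq_trans (size_sum _ _ _)) //; apply/bigmax_leqP => n _.
  by rewrite (leq_trans (size_scale_leq _ _)) // szf.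
rewrite linearB hornerD hornerN.
by rewrite (horner_Phi_biorth_sum _ (Ordinal ltig)) divfK ?natf_fact_neq0 ?subrr.
Qed.

Lemma biorth_unique g : biorth d a g -> g = f.
Proof.
case=> szg Phig; case: hf => szf Phif; apply: functional_extensionality => n.
apply/eqP; rewrite -subr_eq0; apply/eqP; apply: (poly_eq0_Phi (m := n.+1)).
  by rewrite (leq_trans (size_polyD _ _)) // size_polyN szg szf maxnn.
by move=> i _; rewrite linearB hornerD hornerN Phig Phif subrr.
Qed.

End Biorthogonal.

End DeltaOperator.

Theorem mainTheorem1 (K : fieldType) (charK : [pchar K] =i pred0)
    (d : {linear {poly K} -> {poly K}}) (hd : delta_op d)
    (p : nat -> {poly K}) (hp : basic_seq d p)
    (a : nat -> nat -> K) (ha : forall i, a i 0%N != 0) :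
  exists f : nat -> {poly K},
    [/\ biorth d a f,
        forall g : nat -> {poly K}, biorth d a g -> g = f,
        forall n, f n = ((n`!)%:R / \prod_(i < n.+1) a i 0%N) *: \det (Lambda a p n),
        (forall (m : nat) (c : 'I_m -> K),
            \sum_(k < m) c k *: f k = 0 -> forall k, c k = 0) &
        forall g : {poly K},
          g = \sum_(n < size g) ((Phi d a n g).[0] / (n`!)%:R) *: f n].
Proof.
have hf := biorth_Lambda_seq hd hp charK ha.
exists (Lambda_seq p a); split => //.
- move=> g hg; exact: (biorth_unique hd hp charK ha hf hg).
- move=> m c sum0; exact: (biorth_free hd hp charK hf sum0).
- move=> g; exact: (biorth_expansion hd hp charK ha hf g).
Qed.
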